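(* Let $k\ge 3$ and $p=2^k$. In the $k$-dimensional Poisson regression model with complete interactions, let $\boldsymbol{\beta}$ have intercept $\beta_0=0$, main effects $\beta_1=\dots=\beta_k=-1$, and all interaction parameters $\beta_{ij},\dots,\beta_{12\dots k}$ equal to $0$. Then the design which assigns equal weights $1/p$ to the $2^k$ settings of the full factorial $\{0,2\}^k$ is locally $D$-optimal at $\boldsymbol{\beta}$ on $\mathcal{X}=[0,\infty)^k$.
   Context: In the $k$-dimensional Poisson regression model with complete interactions, an observation at $\mathbf{x}=(x_1,\dots,x_k)$ is Poisson distributed with mean $\lambda(\mathbf{x})=\exp(\mathbf{f}(\mathbf{x})^\top\boldsymbol{\beta})$, where $\mathbf{f}(\mathbf{x})$ consists of all $2^k$ monomials $\prod_{j\in S}x_j$, $S\subseteq\{1,\dots,k\}$, so that $\mathbf{f}(\mathbf{x})^\top\boldsymbol{\beta}=\beta_0+\sum_j\beta_jx_j+\sum_{i<j}\beta_{ij}x_ix_j+\dots+\beta_{12\dots k}x_1x_2\cdots x_k$. A design $\xi$ is a finite collection of distinct settings $\mathbf{x}_i\in\mathcal{X}$ with weights $w_i\ge0$ summing to $1$; its information matrix is $\mathbf{M}_{\boldsymbol{\beta}}(\xi)=\sum_i w_i\lambda(\mathbf{x}_i)\mathbf{f}(\mathbf{x}_i)\mathbf{f}(\mathbf{x}_i)^\top$. A design is locally $D$-optimal at $\boldsymbol{\beta}$ on $\mathcal{X}$ if it maximizes $\det\mathbf{M}_{\boldsymbol{\beta}}(\xi)$ over all designs on $\mathcal{X}$.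 *)

From HB Require Import structures.
From mathcomp Require Import all_boot all_order all_algebra.
From mathcomp Require Import all_classical all_reals all_analysis.
Set Implicit Arguments. Unset Strict Implicit. Unset Printing Implicit Defensive.
Import Order.TTheory GRing.Theory Num.Theory.
Local Open Scope ring_scope.

Section PoissonDesign.
Variables (R : realType) (k : nat).

Definition fvec (x : 'rV[R]_k) : 'cV[R]_(#|{set 'I_k}|) :=
  \col_(i < #|{set 'I_k}|) \prod_(j in enum_val i) x ord0 j.

Definition linpred (beta : {set 'I_k} -> R) (x : 'rV[R]_k) : R :=
  \sum_(S : {set 'I_k}) beta S * \prod_(j in S) x ord0 j.

Definition intensity (beta : {set 'I_k} -> R) (x : 'rV[R]_k) : R :=
  expR (linpred beta x).

Definition is_design (X : 'rV[R]_k -> Prop) (I : finType)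
    (x : I -> 'rV[R]_k) (w : I -> R) : Prop :=
  injective x /\ (forall i, X (x i)) /\ (forall i, 0 <= w i) /\ \sum_(i : I) w i = 1.

Definition infoM (beta : {set 'I_k} -> R) (I : finType)
    (x : I -> 'rV[R]_k) (w : I -> R) : 'M[R]_(#|{set 'I_k}|) :=
  \sum_(i : I) (w i * intensity beta (x i)) *: (fvec (x i) *m (fvec (x i))^T).

Definition locally_D_optimal (X : 'rV[R]_k -> Prop) (beta : {set 'I_k} -> R)
    (I : finType) (x : I -> 'rV[R]_k) (w : I -> R) : Prop :=
  is_design X x w /\
  forall (J : finType) (y : J -> 'rV[R]_k) (v : J -> R),
    is_design X y v -> \det (infoM beta y v) <= \det (infoM beta x w).

End PoissonDesign.

From HB Require Import structures.
From mathcomp Require Import all_boot all_order all_algebra.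
From mathcomp Require Import all_classical all_reals all_analysis.
From mathcomp Require Import ring lra.

(* Multiply the information matrix on both sides by [lagrange_mx], which maps the
   monomials f(x) to the Lagrange basis l_T(x) of multilinear polynomials on the nodes
   {0,2}^k.  For the factorial design the result is diagonal with entries
   w lambda(x_T).  For an arbitrary design it is a Gram matrix, so Hadamard's
   inequality bounds its determinant by the product of its diagonal entries, and by
   AM-GM that product is at most the factorial one as soon as the ratios of the
   diagonal entries sum to at most p = 2^k.  That sum is the design average of the
   sensitivity function lambda(x) sum_T l_T(x)^2 / (w lambda(x_T)) of the factorial
   design, which factorises over the coordinates into one-dimensional sensitivities,
   each bounded by 2 through elementary estimates of exp. *)

Set Implicit Arguments.
Unset Strict Implicit.
Unset Printing Implicit Defensive.

Import Order.TTheory GRing.Theory Num.Theory.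
Local Open Scope ring_scope.

Lemma sum_block_mx (V : nmodType) (J : finType) m1 m2 n1 n2
    (Aul : J -> 'M[V]_(m1, n1)) (Aur : J -> 'M[V]_(m1, n2))
    (Adl : J -> 'M[V]_(m2, n1)) (Adr : J -> 'M[V]_(m2, n2)) :
  \sum_i block_mx (Aul i) (Aur i) (Adl i) (Adr i) =
  block_mx (\sum_i Aul i) (\sum_i Aur i) (\sum_i Adl i) (\sum_i Adr i).
Proof.
rewrite unlock; elim: (index_enum J) => [|i s IHs] /=; first by rewrite block_mx0.
by rewrite IHs add_block_mx.
Qed.

Section Gram.
Variables (R : realFieldType) (J : finType) (c : J -> R).
Hypothesis c_ge0 : forall i, 0 <= c i.

Definition gram n (u : J -> 'cV[R]_n) : 'M[R]_n := \sum_i c i *: (u i *m (u i)^T).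

Lemma gram_diag n (u : J -> 'cV[R]_n) r : gram u r r = \sum_i c i * u i r 0 ^+ 2.
Proof. by rewrite summxE; apply: eq_bigr => i _; rewrite !mxE big_ord1 !mxE expr2. Qed.

Lemma gram_diag_ge0 n (u : J -> 'cV[R]_n) r : 0 <= gram u r r.
Proof. by rewrite gram_diag sumr_ge0 // => i _; rewrite mulr_ge0 ?sqr_ge0. Qed.

Lemma det_gram_pivot0 n (u : J -> 'cV[R]_(1 + n)) : gram u 0 0 = 0 -> \det (gram u) = 0.
Proof.
rewrite gram_diag => /eqP; rewrite psumr_eq0 => [/allP cu0|i _]; last first.
  by rewrite mulr_ge0 ?sqr_ge0.
have cu i : c i * u i 0 0 = 0.
  have := cu0 i (mem_index_enum i).
  by rewrite mulf_eq0 sqrf_eq0 => /orP[] /eqP ->; rewrite ?mul0r ?mulr0.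
rewrite (expand_det_row _ 0) big1 // => j _.
rewrite summxE big1 ?mul0r // => i _.
by rewrite !mxE big_ord1 !mxE mulrA cu mul0r.
Qed.

Section Pivot.
Variables (n : nat) (u : J -> 'cV[R]_(1 + n)).
Let a := gram u 0 0.
Hypothesis a_gt0 : 0 < a.

(* One step of Gaussian elimination: [gram gram_reduce] is the Schur complement
   of the pivot [a] in [gram u]. *)
Definition gram_reduce (i : J) : 'cV[R]_n :=
  dsubmx (u i) - (u i 0 0 / a) *: \sum_j (c j * u j 0 0) *: dsubmx (u j).

Lemma gram_reduce_orth : \sum_i (c i * u i 0 0) *: gram_reduce i = 0.
Proof.
rewrite /gram_reduce; under eq_bigr do rewrite scalerBr scalerA.
rewrite sumrB -scaler_suml (eq_bigr (fun i => c i * u i 0 0 ^+ 2 / a)); last first.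
  by move=> i _; ring.
by rewrite -mulr_suml -gram_diag mulfV ?gt_eqF // scale1r subrr.
Qed.

Lemma det_gram_reduce : \det (gram u) = a * \det (gram gram_reduce).
Proof.
set b := \sum_j (c j * u j 0 0) *: dsubmx (u j).
pose E : 'M[R]_(1 + n) := block_mx 1%:M 0 (- a^-1 *: b) 1%:M.
have Eu i : E *m u i = col_mx (u i 0 0)%:M (gram_reduce i).
  rewrite -{1}(vsubmxK (u i)) /E mul_block_col mul1mx mul0mx addr0 mul1mx.
  have -> : usubmx (u i) = (u i 0 0)%:M.
    by rewrite [LHS]mx11_scalar !mxE; congr (u i _ _)%:M; apply: val_inj.
  by rewrite mul_mx_scalar scaleNr scalerN scalerA addrC.
have EgE : E *m gram u *m E^T =
    block_mx a%:M 0 (\sum_i c i *: (gram_reduce i *m ((u i 0 0)%:M)^T)) (gram gram_reduce).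
  have EvE v : E *m (v *m v^T) *m E^T = (E *m v) *m (E *m v)^T.
    by rewrite trmx_mul !mulmxA.
  rewrite mulmx_sumr mulmx_suml.
  under eq_bigr do rewrite -scalemxAr -scalemxAl EvE Eu tr_col_mx mul_col_row scale_block_mx.
  rewrite sum_block_mx; congr block_mx.
    apply/matrixP => x y; rewrite !ord1 summxE /a gram_diag !mxE /= mulr1n.
    by apply: eq_bigr => i _; rewrite !mxE big_ord1 !mxE /= mulr1n expr2.
  rewrite -[RHS]trmx0 -gram_reduce_orth raddf_sum; apply: eq_bigr => i _.
  by rewrite mul_scalar_mx scalerA [RHS]linearZ.
have detE : \det E = 1 by rewrite det_lblock !det1 mulr1.
have := congr1 determinant EgE.
by rewrite !det_mulmx det_tr detE mul1r mulr1 det_lblock det_mx11 mxE eqxx mulr1n.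
Qed.

Lemma gram_reduce_diag r : gram gram_reduce r r <= gram u (lift 0 r) (lift 0 r).
Proof.
set b := \sum_i c i * u i 0 0 * u i (lift 0 r) 0.
have dE i : u i (rshift 1 r) 0 = u i (lift 0 r) 0 by congr (u i _ _); apply: val_inj.
have reduceE i : gram_reduce i r 0 = u i (lift 0 r) 0 - u i 0 0 / a * b.
  rewrite /gram_reduce !mxE summxE dE; congr (_ - _ * _).
  by apply: eq_bigr => j _; rewrite !mxE dE.
rewrite !gram_diag (eq_bigr (fun i => c i * u i (lift 0 r) 0 ^+ 2
    - 2 * b / a * (c i * u i 0 0 * u i (lift 0 r) 0) + (b / a) ^+ 2 * (c i * u i 0 0 ^+ 2)));
  last by move=> i _; rewrite reduceE; ring.
rewrite big_split sumrB /= -!mulr_sumr -/b -gram_diag -/a.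
have -> : \sum_i c i * u i (lift 0 r) 0 ^+ 2 - 2 * b / a * b + (b / a) ^+ 2 * a =
    \sum_i c i * u i (lift 0 r) 0 ^+ 2 - b ^+ 2 / a by field; rewrite gt_eqF.
by rewrite lerBlDr lerDl divr_ge0 ?sqr_ge0 ?ltW.
Qed.

End Pivot.

Lemma det_gram_le_prod_diag n (u : J -> 'cV[R]_n) : \det (gram u) <= \prod_r gram u r r.
Proof.
elim: n u => [|n IHn] u; first by rewrite det_mx00 big_ord0.
rewrite big_ord_recl; have := gram_diag_ge0 u 0; rewrite le0r => /orP[/eqP a0|a_gt0].
  by rewrite (det_gram_pivot0 a0) a0 mul0r.
rewrite (det_gram_reduce a_gt0) ler_pM2l //; apply: le_trans (IHn _) _.
by apply: ler_prod => r _; rewrite gram_diag_ge0 gram_reduce_diag.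
Qed.

End Gram.

Lemma sum_enum_val (V : nmodType) (T : finType) (F : T -> V) :
  \sum_(a < #|T|) F (enum_val a) = \sum_x F x.
Proof. by rewrite -big_enum_val; apply: eq_bigl. Qed.

Lemma prod_le_prod_of_sum_div_le_card (F : realFieldType) (I : finType) (X D : I -> F) :
  (forall i, 0 <= X i) -> (forall i, 0 < D i) -> \sum_i X i / D i <= #|I|%:R ->
  \prod_i X i <= \prod_i D i.
Proof.
move=> X_ge0 D_gt0 sum_le.
have XD_ge0 i : 0 <= X i / D i := divr_ge0 (X_ge0 i) (ltW (D_gt0 i)).
have prod_ratio_le1 : \prod_i (X i / D i) <= 1.
  have := (leif_AGM (A := predT) (fun i _ => XD_ge0 i)).1.
  rewrite (eq_bigl xpredT) // (eq_bigl xpredT) // => /le_trans; apply.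
  rewrite exprn_ile1 ?divr_ge0 ?sumr_ge0 //.
  have [->|I_gt0] := posnP #|I|; first by rewrite invr0 mulr0.
  by rewrite ler_pdivrMr ?ltr0n // mul1r.
have -> : \prod_i X i = \prod_i (X i / D i) * \prod_i D i.
  by rewrite -big_split; apply: eq_bigr => i _ /=; rewrite divfK ?gt_eqF.
by rewrite ler_piMl ?prodr_ge0 // => i _; rewrite ltW.
Qed.

Section ExpBounds.
Variable R : realType.

Lemma expR_ge_pow (n : nat) (s : R) : (0 < n)%N -> 0 <= 1 + s / n%:R ->
  (1 + s / n%:R) ^+ n <= expR s.
Proof.
move=> n_gt0 s_ge.
have -> : expR s = expR (s / n%:R) ^+ n.
  by rewrite -expRM_natl mulrC divfK // pnatr_eq0 -lt0n.
by rewrite lerXn2r ?nnegrE ?expR_ge0 ?expR_ge1Dx.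
Qed.

Lemma expR2_ge5 : 5 <= expR 2 :> R.
Proof.
have h : 0 <= 1 + 2 / 4%:R :> R by lra.
by apply: le_trans (@expR_ge_pow 4 _ isT h); rewrite !exprS expr0; lra.
Qed.

Lemma expR2_le10 : expR 2 <= 10 :> R.
Proof.
have h : 0 <= 1 + -2 / 16%:R :> R by lra.
have := @expR_ge_pow 16 _ isT h; rewrite expRN => {}h.
have e_gt0 : 0 < expR 2 :> R by exact: expR_gt0.
move: h; rewrite -[X in _ <= X]div1r ler_pdivlMr // !exprS expr0; lra.
Qed.

(* [2 * expR (- t) * sens1 t] is the sensitivity function of the equal-weight design
   on {0, 2} in the one-dimensional model. *)
Definition sens1 (t : R) := (1 - t / 2) ^+ 2 + (t / 2) ^+ 2 * expR 2.

Lemma sens1_le_expR_small (t : R) : 0 <= t <= 4 / 5 -> sens1 t <= expR t.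
Proof.
move=> /andP[t_ge0 t_le].
have h : 0 <= 1 + t / 4%:R by lra.
apply: le_trans (@expR_ge_pow 4 _ isT h).
have e2 := expR2_le10; rewrite /sens1 !exprS expr0.
have t2 : 0 <= t * t by nra.
have t3 : 0 <= t * t * t by nra.
have t4 : 0 <= t * t * t * t by nra.
have : t * t * expR 2 <= t * t * 10 by rewrite ler_wpM2l.
nra.
Qed.

Lemma sens1_le_expR_large (t : R) : 4 / 5 <= t -> sens1 t <= expR t.
Proof.
move=> t_ge; rewrite -[t in expR t](subrK 2) expRD mulrC.
apply: le_trans (_ : _ <= expR 2 * (1 + (t - 2) / 4%:R) ^+ 4) _; last first.
  by rewrite ler_wpM2l ?expR_ge0 // expR_ge_pow //; lra.
(* With s = (t - 2) / 2, e^2 (1 + s/2)^4 - sens1 t factors as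
   s^2 (e^2 (1/2 + s/2 + s^2/16) - 1). *)
set s := (t - 2) / 2; set e := expR 2.
have e_ge5 : 5 <= e := expR2_ge5.
have key : 0 <= e * (1/2 + s/2 + s ^+ 2 / 16) - 1.
  have s_ge : -3/5 <= s by rewrite /s; lra.
  have q1 : 0 <= e * s ^+ 2 by rewrite mulr_ge0 ?sqr_ge0 //; lra.
  have q2 : 0 <= (e - 5) * (3/10 + s/2) by apply: mulr_ge0; lra.
  nra.
rewrite -subr_ge0 (_ : _ - _ = s ^+ 2 * (e * (1/2 + s/2 + s ^+ 2 / 16) - 1)).
  by rewrite mulr_ge0 ?sqr_ge0.
by rewrite /sens1 /s /e; field.
Qed.

Lemma sensitivity1_le1 (t : R) : 0 <= t ->
  expR (- t) * (1 - t / 2) ^+ 2 + expR (- t) * (t / 2) ^+ 2 / expR (-2) <= 1.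
Proof.
move=> t_ge0; rewrite (expRN 2) invrK -mulrA -mulrDr expRN mulrC.
rewrite ler_pdivrMr ?expR_gt0 // mul1r -/(sens1 t).
have [t_le|t_gt] := lerP t (4 / 5).
  by apply: sens1_le_expR_small; rewrite t_ge0.
by apply: sens1_le_expR_large; rewrite ltW.
Qed.

End ExpBounds.

Section FactorialDesign.
Variables (R : realType) (k : nat).
Local Notation p := #|{set 'I_k}|.

Lemma card_set_ord : p = (2 ^ k)%N.
Proof. by rewrite -cardsT -powersetT card_powerset cardsT card_ord. Qed.

Definition factorial_point (T : {set 'I_k}) : 'rV[R]_k :=
  \row_j (if j \in T then 2 else 0).

Definition factorial_weight : R := (2 ^ k)%:R^-1.

Definition beta_main (S : {set 'I_k}) : R := if #|S| == 1%N then -1 else 0.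

Lemma linpred_beta_main x : linpred beta_main x = - \sum_j x ord0 j.
Proof.
rewrite /linpred (bigID (fun S : {set 'I_k} => #|S| == 1%N)) /=.
rewrite [X in _ + X]big1 ?addr0 => [|S /negbTE S1]; last by rewrite /beta_main S1 mul0r.
rewrite (eq_bigr (fun S : {set 'I_k} => - \prod_(j in S) x ord0 j)) => [|S S1]; last first.
  by rewrite /beta_main S1 mulN1r.
by rewrite big_cards1 -sumrN; apply: eq_bigr => j _; rewrite big_set1.
Qed.

Lemma intensity_beta_main x : intensity beta_main x = \prod_j expR (- x ord0 j).
Proof. by rewrite /intensity linpred_beta_main -sumrN expR_sum. Qed.

Definition lagrange (T : {set 'I_k}) (x : 'rV[R]_k) : R :=
  \prod_j (if j \in T then x ord0 j / 2 else 1 - x ord0 j / 2).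

Lemma lagrange_factorial_point T T' : lagrange T (factorial_point T') = (T == T')%:R.
Proof.
rewrite /lagrange; case: eqP => [<-|neqTT'].
  by apply: big1 => j _; rewrite !mxE; case: (j \in T); lra.
have /forallPn[j jTT'] : ~~ [forall j, (j \in T) == (j \in T')].
  by apply/negP => /forallP eqTT'; apply: neqTT'; apply/setP => j; apply/eqP.
rewrite (bigD1 j) //= !mxE.
by case: (j \in T) (j \in T') jTT' => [] [] //= _; rewrite ?mul0r //; lra.
Qed.

(* Expand each factor of [lagrange T] as (+-1/2) x_j + [j \notin T]. *)
Definition lagrange_coef (T S : {set 'I_k}) : R :=
  if T \subset S then \prod_(j in S) (if j \in T then 1 / 2 else - 1 / 2) else 0.

Lemma lagrange_expand T x :
  lagrange T x = \sum_S lagrange_coef T S * \prod_(j in S) x ord0 j.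
Proof.
pose c j : R := if j \in T then 1 / 2 else - 1 / 2.
rewrite /lagrange (eq_bigr (fun j => c j * x ord0 j + (if j \in T then 0 else 1))); last first.
  by move=> j _; rewrite /c; case: (j \in T); ring.
rewrite bigA_distr; apply: eq_bigr => S _.
rewrite (bigID [in S]) /= (eq_bigr (fun j => c j * x ord0 j)) => [|j ->] //.
rewrite big_split /= /lagrange_coef; case: ifP => [TS|/negbT/subsetPn[j jT jS]].
  rewrite [X in _ * X]big1 ?mulr1 // => j /negbTE jS.
  by rewrite jS; case: ifP => // jT; move: (fintype.subsetP TS j jT); rewrite jS.
by rewrite [X in _ * X](bigD1 j) //= (negbTE jS) jT !(mul0r, mulr0).
Qed.

Definition lagrange_mx : 'M[R]_p :=
  \matrix_(a, b) lagrange_coef (enum_val a) (enum_val b).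

Definition lagrange_vec (x : 'rV[R]_k) : 'cV[R]_p := \col_a lagrange (enum_val a) x.

Lemma lagrange_mx_fvec x : lagrange_mx *m fvec x = lagrange_vec x.
Proof.
apply/matrixP => a i; rewrite !mxE lagrange_expand -[RHS]sum_enum_val.
by apply: eq_bigr => b _; rewrite !mxE.
Qed.

Lemma lagrange_info beta (I : finType) (y : I -> 'rV[R]_k) (v : I -> R) :
  lagrange_mx *m infoM beta y v *m lagrange_mx^T =
  gram (fun i => v i * intensity beta (y i)) (fun i => lagrange_vec (y i)).
Proof.
rewrite /infoM mulmx_sumr mulmx_suml; apply: eq_bigr => i _.
by rewrite -scalemxAr -scalemxAl -lagrange_mx_fvec trmx_mul !mulmxA.
Qed.

Lemma gram_factorial (c : {set 'I_k} -> R) :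
  gram c (fun T => lagrange_vec (factorial_point T)) = diag_mx (\row_a c (enum_val a)).
Proof.
apply/matrixP => a b; rewrite summxE !mxE (bigD1 (enum_val a)) //= big1 => [|T /negbTE neqT].
  rewrite !mxE big_ord1 !mxE !lagrange_factorial_point eqxx (inj_eq enum_val_inj) eq_sym.
  by case: (a == b); rewrite ?mulr1 ?mulr0 ?addr0.
by rewrite !mxE big_ord1 !mxE lagrange_factorial_point eq_sym neqT mul0r mulr0.
Qed.

Definition factorial_mass (a : 'I_p) : R :=
  factorial_weight * intensity beta_main (factorial_point (enum_val a)).

Lemma factorial_mass_gt0 a : 0 < factorial_mass a.
Proof. by rewrite mulr_gt0 ?expR_gt0 // invr_gt0 ltr0n expn_gt0. Qed.

Lemma det_info_factorial :
  \det lagrange_mx ^+ 2 * \det (infoM beta_main factorial_point (fun _ => factorial_weight))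
  = \prod_a factorial_mass a.
Proof.
have := congr1 determinant (lagrange_info beta_main factorial_point (fun _ => factorial_weight)).
rewrite gram_factorial det_diag !det_mulmx det_tr expr2 mulrAC => ->.
by apply: eq_bigr => a _; rewrite mxE.
Qed.

Lemma det_lagrange_mx_neq0 : \det lagrange_mx != 0.
Proof.
apply/negP => /eqP L0.
have : 0 < \prod_a factorial_mass a by apply: prodr_gt0 => a _; apply: factorial_mass_gt0.
by rewrite -det_info_factorial L0 expr0n mul0r ltxx.
Qed.

Definition lagrange_info_diag beta (I : finType) (y : I -> 'rV[R]_k) (v : I -> R) (a : 'I_p) :=
  \sum_i v i * intensity beta (y i) * lagrange (enum_val a) (y i) ^+ 2.

Lemma lagrange_info_diag_ge0 beta (I : finType) (y : I -> 'rV[R]_k) (v : I -> R) a :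
  (forall i, 0 <= v i) -> 0 <= lagrange_info_diag beta y v a.
Proof.
by move=> v_ge0; apply: sumr_ge0 => i _; rewrite mulr_ge0 ?sqr_ge0 // mulr_ge0 ?expR_ge0.
Qed.

Lemma det_info_le_prod beta (I : finType) (y : I -> 'rV[R]_k) (v : I -> R) :
  (forall i, 0 <= v i) ->
  \det lagrange_mx ^+ 2 * \det (infoM beta y v) <= \prod_a lagrange_info_diag beta y v a.
Proof.
move=> v_ge0; have c_ge0 i : 0 <= v i * intensity beta (y i) by rewrite mulr_ge0 ?expR_ge0.
have := congr1 determinant (lagrange_info beta y v).
rewrite !det_mulmx det_tr expr2 mulrAC => ->.
apply: le_trans (det_gram_le_prod_diag c_ge0 _) _; rewrite le_eqVlt; apply/orP; left.
by apply/eqP/eq_bigr => a _; rewrite gram_diag; apply: eq_bigr => i _; rewrite mxE.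
Qed.

Lemma factorial_sensitivity_le (x : 'rV[R]_k) : (forall j, 0 <= x ord0 j) ->
  intensity beta_main x * \sum_a lagrange (enum_val a) x ^+ 2 / factorial_mass a <= p%:R.
Proof.
move=> x_ge0.
pose A j := expR (- x ord0 j) * (1 - x ord0 j / 2) ^+ 2.
pose B j := expR (- x ord0 j) * (x ord0 j / 2) ^+ 2 / expR (-2).
(* The term of index T factorises over the coordinates, coordinate j contributing
   B j if j \in T and A j otherwise. *)
have termE T : intensity beta_main x * (lagrange T x ^+ 2 /
      (factorial_weight * intensity beta_main (factorial_point T))) =
    (2 ^ k)%:R * \prod_j (if j \in T then B j else A j).
  have -> : \prod_j (if j \in T then B j else A j) =
      intensity beta_main x * lagrange T x ^+ 2 / intensity beta_main (factorial_point T).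
    rewrite /lagrange !intensity_beta_main -prodrXl -!big_split -prodf_div.
    by apply: eq_bigr => j _; rewrite /A /B !mxE; case: (j \in T); rewrite ?oppr0 ?expR0 ?divr1.
  by rewrite /factorial_weight; field; rewrite expR_eq0 pnatr_eq0 expn_eq0.
rewrite /factorial_mass (sum_enum_val (fun T =>
  lagrange T x ^+ 2 / (factorial_weight * intensity beta_main (factorial_point T)))) mulr_sumr.
rewrite (eq_bigr _ (fun T _ => termE T)) -mulr_sumr -bigA_distr card_set_ord.
rewrite ler_piMr ?prodr_ile1 // => j _ /=.
rewrite addrC {1}/A {1}/B sensitivity1_le1 // andbT.
by rewrite addr_ge0 ?divr_ge0 ?expR_ge0 // mulr_ge0 ?expR_ge0 ?sqr_ge0.
Qed.

Lemma sum_lagrange_info_diag_div_le (I : finType) (y : I -> 'rV[R]_k) (v : I -> R) :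
  is_design (fun x => forall j, 0 <= x ord0 j) y v ->
  \sum_a lagrange_info_diag beta_main y v a / factorial_mass a <= p%:R.
Proof.
move=> [_ [y_ge0 [v_ge0 v_sum1]]].
under eq_bigr do rewrite mulr_suml; rewrite exchange_big /=.
apply: le_trans (_ : _ <= \sum_i v i * p%:R) _; last by rewrite -mulr_suml v_sum1 mul1r.
apply: ler_sum => i _.
rewrite (_ : \sum_a _ = v i * (intensity beta_main (y i) *
    \sum_a lagrange (enum_val a) (y i) ^+ 2 / factorial_mass a)).
  by rewrite ler_wpM2l // factorial_sensitivity_le.
by rewrite !mulr_sumr; apply: eq_bigr => a _; rewrite !mulrA.
Qed.

Lemma factorial_is_design :
  is_design (fun x => forall j, 0 <= x ord0 j) factorial_point (fun _ => factorial_weight).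
Proof.
split; [|split; [|split]].
- move=> T T' /matrixP eqTT'; apply/setP => j; have := eqTT' ord0 j; rewrite !mxE.
  by case: (j \in T); case: (j \in T') => //= e; exfalso; lra.
- by move=> T j; rewrite mxE; case: (j \in T); lra.
- by move=> _; rewrite invr_ge0 ler0n.
- by rewrite sumr_const card_set_ord -mulr_natr mulVf // pnatr_eq0 expn_eq0.
Qed.

End FactorialDesign.

Theorem theorem4 (R : realType) (k : nat) (hk : (3 <= k)%N) :
  locally_D_optimal
    (* X = [0, oo)^k *)
    (fun x : 'rV[R]_k => forall j, 0 <= x ord0 j)
    (* beta_0 = 0, beta_j = -1, all interactions 0 *)
    (fun S : {set 'I_k} => if #|S| == 1%N then -1 else 0)
    (* full factorial {0,2}^k, indexed by the subset of coordinates equal to 2 *)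
    (fun T : {set 'I_k} => \row_(j < k) (if j \in T then 2 else 0 : R))
    (fun _ : {set 'I_k} => ((2 ^ k)%:R)^-1).
Proof.
split=> [|J y v y_design]; first exact: factorial_is_design.
have v_ge0 : forall i, 0 <= v i by case: y_design => _ [_ []].
have L2_gt0 : 0 < \det (@lagrange_mx R k) ^+ 2.
  by rewrite exprn_even_gt0 //= det_lagrange_mx_neq0.
rewrite -(ler_pM2l L2_gt0) det_info_factorial.
apply: le_trans (det_info_le_prod _ _ v_ge0) _.
apply: prod_le_prod_of_sum_div_le_card => [a|a|].
- exact: lagrange_info_diag_ge0.
- exact: factorial_mass_gt0.
- by rewrite card_ord; apply: sum_lagrange_info_diag_div_le.
Qed.
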